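(* Let $\mathfrak d$ be a delta operator, $\mathcal Z=(z_i)_{i\ge0}$ a grid, $\xi\in\mathbb K$, and $\mathcal W=(w_i)_{i\ge0}$ with $w_i=z_i+i\xi$. Then the generalized Gončarov basis associated with $(\mathfrak d,\mathcal W)$ coincides with the generalized Gončarov basis associated with $(E_\xi\mathfrak d,\mathcal Z)$.
   Context: $\mathbb K$ is a field of characteristic zero; $E_a$ is the shift $f(x)\mapsto f(x+a)$; a delta operator is a linear operator $\mathfrak d$ on $\mathbb K[x]$ commuting with all $E_a$ and with $\mathfrak d(x)$ a nonzero constant ($E_\xi\mathfrak d$ is again a delta operator). $\varepsilon_z$ is evaluation at $z$. A grid is a sequence in $\mathbb K$. The generalized Gončarov basis associated with $(\mathfrak d,\mathcal Z)$ is the unique sequence $(t_n)_{n\ge0}$ with $\deg t_n=n$ and $\varepsilon_{z_i}(\mathfrak d^{\,i}(t_n))=n!\,\delta_{i,n}$ for all $i,n$. *)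

From HB Require Import structures.
From mathcomp Require Import all_boot all_order all_algebra.
Set Implicit Arguments. Unset Strict Implicit. Unset Printing Implicit Defensive.
Import GRing.Theory.
Local Open Scope ring_scope.

Definition shift (K : fieldType) (a : K) (p : {poly K}) : {poly K} :=
  p \Po ('X + a%:P).

Definition delta_op (K : fieldType) (d : {poly K} -> {poly K}) : Prop :=
  [/\ linear d,
      (forall (a : K) (p : {poly K}), d (shift a p) = shift a (d p)) &
      exists2 c : K, c != 0 & d 'X = c%:P].

Definition shift_comp (K : fieldType) (xi : K) (d : {poly K} -> {poly K}) :=
  fun p => shift xi (d p).

Definition goncarov_basis (K : fieldType) (d : {poly K} -> {poly K})
    (Z : nat -> K) (t : nat -> {poly K}) : Prop :=
  forall n : nat, size (t n) = n.+1 /\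
    forall i : nat, (iter i d (t n)).[Z i] = (n`!)%:R * (i == n)%:R.

From HB Require Import structures.
From mathcomp Require Import all_boot all_order all_algebra.
Import GRing.Theory.
Local Open Scope ring_scope.

(* Since d commutes with every shift, (E_xi d)^i = E_(i xi) d^i, so evaluating
   (E_xi d)^i t_n at z_i is evaluating d^i t_n at z_i + i xi = w_i: the two
   interpolation conditions are literally the same equations. *)

Lemma horner_shift (K : fieldType) (a z : K) (p : {poly K}) :
  (shift a p).[z] = p.[z + a].
Proof. by rewrite /shift horner_comp !hornerE. Qed.

Lemma shift0 (K : fieldType) (p : {poly K}) : shift 0 p = p.
Proof. by rewrite /shift addr0 comp_polyXr. Qed.

Lemma shiftD (K : fieldType) (a b : K) (p : {poly K}) :
  shift a (shift b p) = shift (b + a) p.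
Proof.
by rewrite /shift -comp_polyA comp_polyD comp_polyX comp_polyC polyCD addrA addrAC.
Qed.

Section ShiftCommuting.

Variables (K : fieldType) (d : {poly K} -> {poly K}).
Hypothesis d_shift : forall (a : K) (p : {poly K}), d (shift a p) = shift a (d p).

Lemma iter_shift_comp (xi : K) (i : nat) (p : {poly K}) :
  iter i (shift_comp xi d) p = shift (i%:R * xi) (iter i d p).
Proof.
elim: i => [|i IH] /=; first by rewrite mul0r shift0.
by rewrite /shift_comp IH d_shift shiftD mulrSr mulrDl mul1r.
Qed.

Lemma horner_iter_shift_comp (xi z : K) (i : nat) (p : {poly K}) :
  (iter i (shift_comp xi d) p).[z] = (iter i d p).[z + i%:R * xi].
Proof. by rewrite iter_shift_comp horner_shift. Qed.

Lemma goncarov_basis_shift_comp (Z : nat -> K) (xi : K) (t : nat -> {poly K}) :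
  goncarov_basis d (fun i => Z i + i%:R * xi) t <->
  goncarov_basis (shift_comp xi d) Z t.
Proof.
by split=> tB n; have [size_t ev_t] := tB n; split=> // i;
  rewrite ?horner_iter_shift_comp // -horner_iter_shift_comp.
Qed.

End ShiftCommuting.

Theorem mainTheorem7 (K : fieldType) (hK : [pchar K] =i pred0)
    (d : {poly K} -> {poly K}) (hd : delta_op d) (Z : nat -> K) (xi : K)
    (t : nat -> {poly K}) :
  goncarov_basis d (fun i => Z i + i%:R * xi) t <->
  goncarov_basis (shift_comp xi d) Z t.
Proof.
have [_ d_shift _] := hd.
exact: goncarov_basis_shift_comp.
Qed.
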